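(* Let $\hat\mu$ be a randomized base policy, i.e., a fixed probability distribution on $\mathcal U$ from which, in each slot, the action $\mathbf u$ is drawn independently of the state and of the arrivals; write $\mathbb E^{\hat\mu}$ for expectation over $\mathbf u\sim\hat\mu$. For each $n\in\mathcal N$ and $m\in\mathcal M_n$, let $(\hat\theta_{n,m},\hat V_{n,m})$, with $\hat\theta_{n,m}\in\mathbb R$ and $\hat V_{n,m}:\mathcal Q_{n,m}\to\mathbb R$, satisfy $$\hat\theta_{n,m}+\hat V_{n,m}(Q_{n,m})=\mathbb E^{\hat\mu}[g_{n,m}(Q_{n,m},\mathbf u)]+\sum_{Q'_{n,m}\in\mathcal Q_{n,m}}\mathbb E^{\hat\mu}\big[\Pr[Q'_{n,m}\mid Q_{n,m},\mathbf u]\big]\hat V_{n,m}(Q'_{n,m})\quad\forall Q_{n,m}\in\mathcal Q_{n,m},$$ where $g_{n,m}(Q_{n,m},\mathbf u)=Q_{n,m}+w\,\mathbf 1(u_n=m)p(n,m)$ and $\Pr[Q'_{n,m}\mid Q_{n,m},\mathbf u]$ is the probability that the $(n,m)$-component of the next state equals $Q'_{n,m}$ given current component $Q_{n,m}$ and action $\mathbf u$. Then $\hat\theta=\sum_{n\in\mathcal N}\sum_{m\in\mathcal M_n}\hat\theta_{n,m}$ and $\hat V(\mathbf Q)=\sum_{n\in\mathcal N}\sum_{m\in\mathcal M_n}\hat V_{n,m}(Q_{n,m})$ satisfy $$\hat\theta+\hat V(\mathbf Q)=\mathbb E^{\hat\mu}[g(\mathbf Q,\mathbf u)]+\sum_{\mathbf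 Q'\in\mathcal Q}\mathbb E^{\hat\mu}\big[\Pr[\mathbf Q'\mid\mathbf Q,\mathbf u]\big]\hat V(\mathbf Q')\quad\forall\mathbf Q\in\mathcal Q,$$ i.e., the value function of $\hat\mu$ is additively separable over BS-content pairs.
   Context: Model. Let $N\ge 1$, $\mathcal N=\{0,1,\dots,N\}$ (base station $0$ is the macro base station, MBS) and $\mathcal N^+=\{1,\dots,N\}$ (small base stations, SBSs). Let $\mathcal M=\{1,\dots,M\}$ be the set of contents. For each $n\in\mathcal N$ let $\mathcal M_n\subseteq\mathcal M$ be the set of contents cached at BS $n$, with $\mathcal M_0=\mathcal M$; put $\tilde{\mathcal M}_n=\mathcal M_n\cup\{0\}$ and $\mathcal N_m=\{n\in\mathcal N^+: m\in\mathcal M_n\}$. Powers $p(n,m)\ge 0$ are given for $n\in\mathcal N$, $m\in\mathcal M_n$, and $p(n,0)=0$. A weight $w\ge 0$ is fixed. The feasible action space is $\mathcal U=\{\mathbf u=(u_n)_{n\in\mathcal N}: u_n\in\tilde{\mathcal M}_n\ \forall n,\ u_0\sum_{n\in\mathcal N^+}u_n=0\}$. A state is $\mathbf Q=(Q_{n,m})_{n\in\mathcal N,m\in\mathcal M_n}$ with $Q_{n,m}\in\mathcal Q_{n,m}=\{0,1,\dots,N_{n,m}\}$ for given positive integers $N_{n,m}$; $\mathcal Q=\prod_{n\in\mathcal N}\prod_{m\in\mathcal M_n}\mathcal Q_{n,m}$. Arrivals $A_{n,m}$ ($n\in\mathcal N$, $m\in\mathcal M$) are mutually independent nonnegative-integer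 random variables with fixed distributions, i.i.d. across time slots; $\tilde A_{0,m}=A_{0,m}+\sum_{n\in\mathcal N^+\setminus\mathcal N_m}A_{n,m}$. Given state $\mathbf Q$ and action $\mathbf u$, the next state $\mathbf Q'$ is $Q'_{0,m}=\min\{\mathbf 1(u_0\neq m)Q_{0,m}+\tilde A_{0,m},N_{0,m}\}$ for $m\in\mathcal M_0$ and $Q'_{n,m}=\min\{\mathbf 1(u_0\neq m\text{ and }u_n\neq m)Q_{n,m}+A_{n,m},N_{n,m}\}$ for $n\in\mathcal N^+$, $m\in\mathcal M_n$; $\Pr[\mathbf Q'\mid\mathbf Q,\mathbf u]$ is the induced transition probability. The per-stage cost is $g(\mathbf Q,\mathbf u)=d(\mathbf Q)+w\,p(\mathbf u)$ with $d(\mathbf Q)=\sum_{n\in\mathcal N}\sum_{m\in\mathcal M_n}Q_{n,m}$ and $p(\mathbf u)=\sum_{n\in\mathcal N}p(n,u_n)$. *)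

From HB Require Import structures.
From mathcomp Require Import all_boot all_order all_algebra.
Set Implicit Arguments. Unset Strict Implicit. Unset Printing Implicit Defensive.
Import Order.TTheory GRing.Theory Num.Theory.
Local Open Scope ring_scope.

(* Conventions: base stations are 'I_(N.+1) (ord0 = MBS); content indices are
   encoded as values of 'I_(M.+1), where 0 (= ord0) means "no content / idle"
   and the contents are 1..M.  Ms n is the cache set M_n (a subset of {1..M}). *)

Section Model.
Variables (R : realFieldType) (N M : nat).
Variable Ms : 'I_(N.+1) -> {set 'I_(M.+1)}.
Variable Nb : 'I_(N.+1) -> 'I_(M.+1) -> nat.

Definition pairT := ('I_(N.+1) * 'I_(M.+1))%type.

Definition vpair (p : pairT) : bool := p.2 \in Ms p.1.

(* A common bound K >= every N_{n,m}; used to size finite types. *)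
Definition Kb : nat := (\max_(p : pairT) Nb p.1 p.2)%N.

Definition actT := {ffun 'I_(N.+1) -> 'I_(M.+1)}.
Definition Uset : {set actT} :=
  [set u : actT | [forall n, (u n == ord0) || (u n \in Ms n)] &&
     ((nat_of_ord (u ord0)) * (\sum_(n | n != ord0) nat_of_ord (u n)) == 0)%N].

(* States Q = (Q_{n,m}) with Q_{n,m} in {0..N_{n,m}}; entries outside the
   BS-content pairs are fixed to 0 (so Qset is in bijection with the product). *)
Definition stT := {ffun pairT -> 'I_(Kb.+1)}.
Definition Qset : {set stT} :=
  [set Q : stT | [forall p, if vpair p then (Q p <= Nb p.1 p.2)%N
                            else (nat_of_ord (Q p) == 0)%N]].

(* Probability mass function on nat: nonnegative and summing to 1
   (the infinite sum written out as a limit of the monotone partial sums). *)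
Definition is_pmf (f : nat -> R) : Prop :=
  (forall k, 0 <= f k) /\ (forall K, \sum_(k < K) f k <= 1) /\
  (forall e, 0 < e -> exists K, 1 - e <= \sum_(k < K) f k).

(* Law of min(A, Kb) for A ~ f, a random variable in {0..Kb}. *)
Definition ptrunc (f : nat -> R) (k : 'I_(Kb.+1)) : R :=
  if (k < Kb)%N then f k else 1 - \sum_(j < Kb) f j.

(* Arrival vectors (A_{n,m}) truncated at Kb (n in N, m in {1..M}; the m = 0
   entries are fixed to 0). Since every N_{n,m} <= Kb, the next state computed
   from the truncated arrivals coincides with the one computed from A. *)
Definition arrT := {ffun pairT -> 'I_(Kb.+1)}.
Definition Bset : {set arrT} :=
  [set B : arrT | [forall n, nat_of_ord (B (n, ord0)) == 0%N]].

Variable a : 'I_(N.+1) -> 'I_(M.+1) -> nat -> R.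

Definition PrB (B : arrT) : R :=
  \prod_(p : pairT | p.2 != ord0) ptrunc (a p.1 p.2) (B p).

Definition Atil0 (m : 'I_(M.+1)) (B : arrT) : nat :=
  (B (ord0, m) + \sum_(n : 'I_(N.+1) | (n != ord0) && (m \notin Ms n)) B (n, m))%N.

Definition nextc (n : 'I_(N.+1)) (m : 'I_(M.+1)) (x : nat) (u : actT) (B : arrT)
  : nat :=
  if n == ord0 then minn ((u ord0 != m) * x + Atil0 m B) (Nb n m)
  else minn (((u ord0 != m) && (u n != m)) * x + B (n, m)) (Nb n m).

Definition Pcomp n m (x : nat) (u : actT) (q' : nat) : R :=
  \sum_(B in Bset) PrB B * (nextc n m x u B == q')%:R.

Definition Ptrans (Q : stT) (u : actT) (Q' : stT) : R :=
  \sum_(B in Bset) PrB B *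
     ([forall p : pairT, vpair p ==> (nextc p.1 p.2 (Q p) u B == Q' p)])%:R.

Variables (pw : 'I_(N.+1) -> 'I_(M.+1) -> R) (w : R).

Definition dcost (Q : stT) : R := (\sum_(p : pairT | vpair p) nat_of_ord (Q p))%:R.
Definition pcost (u : actT) : R := \sum_(n : 'I_(N.+1)) pw n (u n).
Definition gcost (Q : stT) (u : actT) : R := dcost Q + w * pcost u.

Definition gcomp n m (x : nat) (u : actT) : R :=
  x%:R + w * ((u n == m)%:R * pw n m).

Definition is_policy (mu : actT -> R) : Prop :=
  (forall u, 0 <= mu u) /\ (forall u, u \notin Uset -> mu u = 0) /\
  \sum_(u in Uset) mu u = 1.

Definition Emu (mu : actT -> R) (f : actT -> R) : R := \sum_(u in Uset) mu u * f u.

End Model.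

(** The cost and the transition kernel both factor through BS-content pairs:
    the per-stage cost is the sum of the pair costs, and, conditionally on the
    action and on the (common) arrival vector, the next state is the
    deterministic vector of next pair components.  Hence summing the pair
    Bellman equations, averaging over the policy and over the arrivals
    commutes with the sum over pairs, and the summed value function satisfies
    the joint Bellman equation. *)

From HB Require Import structures.
From mathcomp Require Import all_boot all_order all_algebra.
Set Implicit Arguments. Unset Strict Implicit. Unset Printing Implicit Defensive.
Import Order.TTheory GRing.Theory Num.Theory.
Local Open Scope ring_scope.

Section Separability.
Variables (R : realFieldType) (N M : nat).
Variable Ms : 'I_(N.+1) -> {set 'I_(M.+1)}.
Variable Nb : 'I_(N.+1) -> 'I_(M.+1) -> nat.
Variable a : 'I_(N.+1) -> 'I_(M.+1) -> nat -> R.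

Lemma Emu_sum (mu : actT N M -> R) (I : finType) (P : pred I)
    (F : I -> actT N M -> R) :
  Emu Ms mu (fun u => \sum_(i | P i) F i u) = \sum_(i | P i) Emu Ms mu (F i).
Proof.
rewrite /Emu exchange_big /=.
by apply: eq_bigr => u _; rewrite mulr_sumr.
Qed.

Lemma Emu_mulr (mu : actT N M -> R) (f : actT N M -> R) (c : R) :
  Emu Ms mu f * c = Emu Ms mu (fun u => f u * c).
Proof. by rewrite /Emu mulr_suml; apply: eq_bigr => u _; rewrite mulrA. Qed.

Lemma Nb_le_Kb n m : (Nb n m <= Kb Nb)%N.
Proof. exact: (@leq_bigmax _ (fun p : pairT N M => Nb p.1 p.2) (n, m)). Qed.

Lemma nextc_le n m x u B : (nextc (Nb:=Nb) Ms n m x u B <= Nb n m)%N.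
Proof. by rewrite /nextc; case: ifP => _; rewrite geq_minr. Qed.

Lemma sum_Pcomp_mul n m x u (f : nat -> R) :
  \sum_(q' < (Nb n m).+1) Pcomp Ms Nb a n m x u q' * f q' =
  \sum_(B in Bset Nb) PrB a B * f (nextc (Nb:=Nb) Ms n m x u B).
Proof.
rewrite /Pcomp; under eq_bigr do rewrite mulr_suml.
rewrite exchange_big /=; apply: eq_bigr => B _.
under eq_bigr do rewrite -mulrA.
rewrite -mulr_sumr; congr (_ * _).
have next_lt : (nextc (Nb:=Nb) Ms n m x u B < (Nb n m).+1)%N
  by rewrite ltnS nextc_le.
rewrite (bigD1 (Ordinal next_lt)) //= eqxx mul1r big1 ?addr0 // => q' q'_ne.
rewrite (_ : (_ == _) = false) ?mul0r //; apply: contraNF q'_ne => /eqP next_q'.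
by apply/eqP/val_inj; rewrite /= next_q'.
Qed.

(* Off the BS-content pairs the entries are set to 0, as [Qset] requires. *)
Definition nextQ (Q : stT Nb) (u : actT N M) (B : arrT Nb) : stT Nb :=
  [ffun p => if vpair Ms p then inord (nextc (Nb:=Nb) Ms p.1 p.2 (Q p) u B)
             else ord0].

Lemma nextQ_pair (Q : stT Nb) u B p : vpair Ms p ->
  nat_of_ord (nextQ Q u B p) = nextc (Nb:=Nb) Ms p.1 p.2 (Q p) u B.
Proof.
by move=> vp; rewrite ffunE vp inordK // ltnS (leq_trans (nextc_le _ _ _ _ _)) ?Nb_le_Kb.
Qed.

Lemma nextQ_in_Qset (Q : stT Nb) u B : nextQ Q u B \in Qset Ms Nb.
Proof.
rewrite inE; apply/forallP => p.
case vp: (vpair Ms p); first by rewrite nextQ_pair ?nextc_le.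
by rewrite ffunE vp.
Qed.

Lemma nextc_agreeE (Q : stT Nb) u B (Q' : stT Nb) : Q' \in Qset Ms Nb ->
  [forall p, vpair Ms p ==> (nextc (Nb:=Nb) Ms p.1 p.2 (Q p) u B == Q' p)] =
  (Q' == nextQ Q u B).
Proof.
move=> /[!inE] /forallP Q'_in; apply/forallP/eqP => [agree | ->].
  apply/ffunP => p; apply: val_inj => /=; have := Q'_in p.
  case vp: (vpair Ms p); last by move=> /eqP ->; rewrite ffunE vp.
  by rewrite nextQ_pair //; have /implyP/(_ vp)/eqP := agree p.
by move=> p; apply/implyP => vp; rewrite nextQ_pair.
Qed.

Lemma sum_Ptrans_mul (Q : stT Nb) u (G : stT Nb -> R) :
  \sum_(Q' in Qset Ms Nb) Ptrans (Nb:=Nb) Ms a Q u Q' * G Q' =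
  \sum_(B in Bset Nb) PrB a B * G (nextQ Q u B).
Proof.
rewrite /Ptrans; under eq_bigr do rewrite mulr_suml.
rewrite exchange_big /=; apply: eq_bigr => B _.
rewrite (bigD1 (nextQ Q u B)) ?nextQ_in_Qset //= nextc_agreeE ?nextQ_in_Qset //.
rewrite eqxx mulr1 big1 ?addr0 // => Q' /andP[Q'_in Q'_ne].
by rewrite nextc_agreeE // (negbTE Q'_ne) mulr0 mul0r.
Qed.

Variables (pw : 'I_(N.+1) -> 'I_(M.+1) -> R) (w : R).
Hypothesis idle_uncached : forall n, ord0 \notin Ms n.
Hypothesis idle_free : forall n, pw n ord0 = 0.

(* Under a feasible action each BS serves one of its cached contents or idles
   at zero power, so its power is recovered by summing over its cache. *)
Lemma pcost_pairs u : u \in Uset Ms ->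
  \sum_(p : pairT N M | vpair Ms p) (u p.1 == p.2)%:R * pw p.1 p.2 = pcost pw u.
Proof.
move=> /[!inE] /andP[/forallP u_feas _].
rewrite /pcost -(pair_big_dep xpredT (fun n m => m \in Ms n)
  (fun n m => (u n == m)%:R * pw n m)) /=.
apply: eq_bigr => n _; have /orP[/eqP un0 | un_in] := u_feas n.
  rewrite un0 idle_free big1 // => m m_in.
  by rewrite (_ : (ord0 == m) = false) ?mul0r //; apply: contraNF (idle_uncached n) => /eqP ->.
rewrite (bigD1 (u n)) //= eqxx mul1r big1 ?addr0 // => m /andP[_ m_ne].
by rewrite eq_sym (negbTE m_ne) mul0r.
Qed.

Lemma gcost_pairs (Q : stT Nb) u : u \in Uset Ms ->
  \sum_(p : pairT N M | vpair Ms p) gcomp pw w p.1 p.2 (Q p) u = gcost Ms pw w Q u.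
Proof.
move=> u_feas; rewrite /gcomp big_split /= -mulr_sumr pcost_pairs //.
by rewrite /gcost /dcost natr_sum.
Qed.

End Separability.

Theorem lemma4 (R : realFieldType) (N M : nat)
  (Ms : 'I_(N.+1) -> {set 'I_(M.+1)})
  (Nb : 'I_(N.+1) -> 'I_(M.+1) -> nat)
  (a : 'I_(N.+1) -> 'I_(M.+1) -> nat -> R)
  (pw : 'I_(N.+1) -> 'I_(M.+1) -> R) (w : R)
  (mu : actT N M -> R)
  (theta : 'I_(N.+1) -> 'I_(M.+1) -> R)
  (V : 'I_(N.+1) -> 'I_(M.+1) -> nat -> R)
  (HN : (0 < N)%N)
  (HMs0 : Ms ord0 = [set m | m != ord0])
  (HMs : forall n, ord0 \notin Ms n)
  (HNb : forall n m, m \in Ms n -> (0 < Nb n m)%N)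
  (Hpw : forall n m, m \in Ms n -> 0 <= pw n m)
  (Hpw0 : forall n, pw n ord0 = 0)
  (Hw : 0 <= w)
  (Ha : forall n m, m != ord0 -> is_pmf (a n m))
  (Hmu : is_policy Ms mu)
  (Hloc : forall n m, m \in Ms n -> forall q : nat, (q <= Nb n m)%N ->
     theta n m + V n m q =
       Emu Ms mu (gcomp pw w n m q) +
       \sum_(q' < (Nb n m).+1)
          Emu Ms mu (fun u => Pcomp Ms Nb a n m q u q') * V n m q') :
  forall Q, Q \in Qset Ms Nb ->
    (\sum_(p : pairT N M | vpair Ms p) theta p.1 p.2) +
      (\sum_(p : pairT N M | vpair Ms p) V p.1 p.2 (Q p)) =
    Emu Ms mu (gcost (Nb:=Nb) Ms pw w Q) +
    \sum_(Q' in Qset Ms Nb)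
       Emu Ms mu (fun u => Ptrans (Nb:=Nb) Ms a Q u Q') *
       (\sum_(p : pairT N M | vpair Ms p) V p.1 p.2 (Q' p)).
Proof.
move=> Q /[!inE] /forallP Q_in.
have Q_pair p : vpair Ms p -> (Q p <= Nb p.1 p.2)%N by have := Q_in p => /[swap] ->.
pose Vsum (Q' : stT Nb) := \sum_(p : pairT N M | vpair Ms p) V p.1 p.2 (Q' p).
rewrite -big_split /= (eq_bigr _ (fun p vp => Hloc p.1 p.2 vp (Q p) (Q_pair p vp))).
rewrite big_split /=; congr (_ + _).
  by rewrite -Emu_sum /Emu; apply: eq_bigr => u u_feas; rewrite (gcost_pairs _ HMs Hpw0).
transitivity (Emu Ms mu (fun u => \sum_(B in Bset Nb) PrB a B * Vsum (nextQ Ms Q u B))).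
  under eq_bigr do under eq_bigr do rewrite Emu_mulr.
  under eq_bigr do rewrite -Emu_sum.
  rewrite -Emu_sum /Emu; apply: eq_bigr => u _; congr (_ * _).
  under eq_bigr do rewrite sum_Pcomp_mul.
  rewrite exchange_big /=; apply: eq_bigr => B _.
  by rewrite /Vsum mulr_sumr; apply: eq_bigr => p vp; rewrite nextQ_pair.
under [RHS]eq_bigr do rewrite Emu_mulr.
by rewrite -Emu_sum /Emu; apply: eq_bigr => u _; rewrite sum_Ptrans_mul.
Qed.
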